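(* Let $k\ge2$. The first-order group formula $\alpha(x)=\forall y\,([y^{-1}xy,x]=e)$ defines in $BS(1,k)$ the subgroup $A$, i.e. $\{g\in BS(1,k): BS(1,k)\models\alpha(g)\}=A$.
   Context: $BS(1,k)=\langle a,b\mid b^{-1}ab=a^k\rangle$, identified with $\mathbb{Z}[1/k]\rtimes\mathbb{Z}$ (pairs $(y,m)$, product $(y_1,m_1)(y_2,m_2)=(y_1+y_2k^{-m_1},m_1+m_2)$), with $a=(1,0)$, $b=(0,1)$. $A$ is the normal closure of $a$, equal to $\{(y,0):y\in\mathbb{Z}[1/k]\}$. The commutator is $[x,y]=x^{-1}y^{-1}xy$. *)

(* BS(1,k) realised as Z[1/k] ⋊ Z inside rat * int. *)
From HB Require Import structures.
From mathcomp Require Import all_boot all_order all_algebra.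
Set Implicit Arguments. Unset Strict Implicit. Unset Printing Implicit Defensive.
Import Order.TTheory GRing.Theory Num.Theory.
Local Open Scope ring_scope.

Definition inZk (k : nat) (q : rat) : Prop :=
  exists (z : int) (n : nat), q = z%:~R / (k%:R ^+ n).

Definition inBS (k : nat) (g : rat * int) : Prop := inZk k g.1.

Definition bs_mul (k : nat) (g h : rat * int) : rat * int :=
  (g.1 + h.1 * (k%:R : rat) ^ (- g.2), g.2 + h.2).

Definition bs_inv (k : nat) (g : rat * int) : rat * int :=
  (- (g.1 * (k%:R : rat) ^ g.2), - g.2).

Definition bs_one : rat * int := (0, 0).

Definition bs_comm (k : nat) (x y : rat * int) : rat * int :=
  bs_mul k (bs_mul k (bs_mul k (bs_inv k x) (bs_inv k y)) x) y.

Definition inA (k : nat) (g : rat * int) : Prop := inBS k g /\ g.2 = 0.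

Definition alpha (k : nat) (x : rat * int) : Prop :=
  forall y, inBS k y -> bs_comm k (bs_mul k (bs_mul k (bs_inv k y) x) y) x = bs_one.

(** Every conjugate of [x = (p, m)] lies in the same coset [(_, m)] of [A], and
    two elements [(p, m)], [(q, m)] of one such coset have commutator
    [((q - p) k^m (1 - k^m), 0)].  For [x] in [A] ([m = 0]) this vanishes for
    every conjugate.  For [m <> 0] it vanishes only when the conjugate equals
    [x], which fails for the conjugate by the generator [a]. *)

From mathcomp Require Import all_boot all_order all_algebra.
From mathcomp Require Import ring.
Import GRing.Theory Num.Theory.
Local Open Scope ring_scope.

Section BaumslagSolitar.

Variable k : nat.
Hypothesis k_gt1 : (1 < k)%N.

Local Notation K := (k%:R : rat).

Lemma natr_k_neq0 : K != 0.
Proof. by rewrite pnatr_eq0 -lt0n ltnW. Qed.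

Lemma natr_k_expz_eq1 (m : int) : (K ^ m == 1) = (m == 0).
Proof.
have K_neq1 : K != 1 by rewrite pnatr_eq1 gtn_eqF.
case: m => n; first by rewrite -exprnP pexprn_eq1 ?ler0n // (negbTE K_neq1) orbF.
by rewrite NegzE -exprnN invr_eq1 pexprn_eq1 ?ler0n // (negbTE K_neq1).
Qed.

Lemma bs_conj_snd (x y : rat * int) :
  (bs_mul k (bs_mul k (bs_inv k y) x) y).2 = x.2.
Proof. by rewrite /= addrC addrA addrN add0r. Qed.

Lemma bs_conj_a (p : rat) (m : int) :
  bs_mul k (bs_mul k (bs_inv k (1, 0)) (p, m)) (1, 0) = (p - 1 + K ^ (- m), m).
Proof.
by rewrite /bs_mul /bs_inv /= !oppr0 !add0r !addr0 expr0z !mul1r mulr1 (addrC (-1)).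
Qed.

Lemma bs_comm_coset (p q : rat) (m : int) :
  bs_comm k (p, m) (q, m) = ((q - p) * K ^ m * (1 - K ^ m), 0).
Proof.
rewrite /bs_comm /bs_mul /bs_inv /= opprK.
have -> : - (- m - m) = m + m by ring.
have -> : - (- m - m + m) = m by ring.
have -> : - m - m + m + m = 0 by ring.
rewrite expfzDr ?natr_k_neq0 //; congr (_, _); ring.
Qed.

Lemma bs_comm_coset_eq1 (p q : rat) (m : int) :
  bs_comm k (p, m) (q, m) = bs_one <-> p = q \/ m = 0.
Proof.
rewrite bs_comm_coset /bs_one; split.
- case=> /eqP; rewrite !mulf_eq0 subr_eq0 expfz_eq0 (negbTE natr_k_neq0) andbF.
  rewrite orbF subr_eq0 [1 == _]eq_sym natr_k_expz_eq1 => /orP[/eqP|/eqP]; auto.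
- by case=> [->|->]; rewrite ?subrr ?expr0z ?mul0r ?subrr ?mulr0.
Qed.

End BaumslagSolitar.

Theorem lemma4p4 (k : nat) (hk : (2 <= k)%N) (g : rat * int) :
  inBS k g -> (alpha k g <-> inA k g).
Proof.
case: g => p m g_BS; split => [alpha_g | [_ /= ->] y _].
- split=> //.
  have a_BS : inBS k (1, 0) by exists 1, 0%N; rewrite /= expr0 divr1.
  move: (alpha_g _ a_BS); rewrite bs_conj_a bs_comm_coset_eq1 // => -[conj_eq | //].
  have : (k%:R : rat) ^ (- m) == 1.
    by apply/eqP; apply: (addrI (p - 1)); rewrite conj_eq; ring.
  by rewrite natr_k_expz_eq1 // oppr_eq0 => /eqP.
- case conj_eq: (bs_mul _ _ _) => [q n].
  have -> : n = 0 by move: (bs_conj_snd k (p, 0) y); rewrite conj_eq.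
  by apply/bs_comm_coset_eq1; auto.
Qed.
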